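(* Let $K$ be an oriented Legendrian knot with a front diagram $D$ whose arcs $x_1,\dots,x_n$ (pieces of $D$ from one undercrossing to the next, possibly containing cusps), numbered consecutively along the orientation, give the presentation $\operatorname{GLR}(K)=\langle x_1,\dots,x_n\mid r_1,\dots,r_n\rangle$ with $r_i\colon u^{p_i}d^{q_i}(x_i)\ast^{\varepsilon_i}x_{k_i}=x_{i+1}$ ($x_{n+1}=x_1$). For $N\ge1$, let $S_+^NS_-^N(K)$ be represented by the diagram obtained from $D$ by performing $N$ positive and $N$ negative stabilizations on the arc $x_1$, so that $\operatorname{GLR}(S_+^NS_-^N(K))=\langle x_1,\dots,x_n\mid r_1',r_2,\dots,r_n\rangle$ with $r_1'\colon u^{2N+p_1}d^{2N+q_1}(x_1)\ast^{\varepsilon_1}x_{k_1}=x_2$. Let $(X,\ast,u,d)$ be a finite block GL-rack with diagonal map $\Delta=\alpha_1\cdots\alpha_l$, blocks $A_i=\operatorname{supp}(\alpha_i)$, induced GL-quandle $(\widetilde X=\{a_1,\dots,a_l\},\tilde\ast,\tilde u,\tilde d)$ and projection $\pi$. Then, identifying homomorphisms out of these presented GL-racks with their values on $x_1,\dots,x_n$, $\operatorname{Hom}(\operatorname{GLR}(K),\widetilde X)=\operatorname{Hom}(\operatorname{GLR}(S_+^NS_-^N(K)),\widetilde X)$; that is, for every $\psi\in\operatorname{Hom}(\operatorname{GLR}(K),\widetilde X)$ there is $\psi'\in\operatorname{Hom}(\operatorname{GLR}(S_+^NS_-^N(K)),\widetilde X)$ with $\psi'(x_i)=\psi(x_i)$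 for all $i$ (and conversely). Moreover, if $|\operatorname{Lift}(\psi)|\neq0$, then $|\operatorname{Lift}(\psi')|\neq0$ if and only if $\Delta^{2N}=\operatorname{id}_X$.
   Context: A rack is a set $X$ with a binary operation $\ast$ such that for every $y\in X$ the map $x\mapsto x\ast y$ is a bijection of $X$ (inverse written $x\mapsto x\ast^{-1}y$; $\ast^{+1}=\ast$) and $(x\ast y)\ast z=(x\ast z)\ast(y\ast z)$ for all $x,y,z$. A GL-rack is a quadruple $(X,\ast,u,d)$ where $(X,\ast)$ is a rack and $u,d\colon X\to X$ are maps such that for all $x,y\in X$: $u(d(x\ast x))=d(u(x\ast x))=x$; $u(x\ast y)=u(x)\ast y$ and $d(x\ast y)=d(x)\ast y$; $x\ast u(y)=x\ast d(y)=x\ast y$ (one has $ud=du$). A GL-quandle is a GL-rack with $x\ast x=x$. Homomorphisms preserve $\ast,u,d$. The diagonal map is $\Delta(x)=x\ast x$; for finite $X$ it is a bijection with $\Delta=(u\circ d)^{-1}$. A finite GL-rack is a block GL-rack if all cycles in the disjoint cycle decomposition $\Delta=\alpha_1\cdots\alpha_l$ (fixed points counted as $1$-cycles) have the same length; the blocks are $A_i=\operatorname{supp}(\alpha_i)$. The induced GL-quandle is $\widetilde X=\{a_1,\dots,a_l\}$ with $\pi\colon X\to\widetilde X$, $\pi(A_i)=\{a_i\}$, $a_i\tilde\ast a_j=\pi(A_i\ast A_j)$, $\tilde u(a_i)=\pi(u(A_i))$, $\tilde d(a_i)=\pi(d(A_i))$ (well defined). For $\psi$ a homomorphism from a fundamental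 GL-rack $G$ to $\widetilde X$, $\operatorname{Lift}(\psi)=\{\phi\in\operatorname{Hom}(G,X):\pi\circ\phi=\psi\}$. Legendrian knots lie in $(\mathbb{R}^3,\xi_{\mathrm{std}})$ and are represented by oriented front diagrams; positive/negative stabilization $S_\pm$ inserts a zigzag ($S_+$ adds two cusps traversed downward, $S_-$ two cusps traversed upward). The fundamental GL-rack $\operatorname{GLR}(K)$ is presented by the arcs of a front diagram with the relations $r_i$ above, where $p_i$ (resp. $q_i$) is the number of cusps traversed upward (resp. downward) on the arc $x_i$, $x_{k_i}$ is the over-arc at the undercrossing ending $x_i$, and $\varepsilon_i=\pm1$ its sign; this is a Legendrian isotopy invariant. *)

From mathcomp Require Import all_boot.
Set Implicit Arguments. Unset Strict Implicit. Unset Printing Implicit Defensive.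

Record is_GLrack (X : Type) (op : X -> X -> X) (u d : X -> X) : Prop := {
  rack_bij : forall y, bijective (fun x => op x y);
  rack_dist : forall x y z, op (op x y) z = op (op x z) (op y z);
  gl_ud : forall x, u (d (op x x)) = x;
  gl_du : forall x, d (u (op x x)) = x;
  gl_u_op : forall x y, u (op x y) = op (u x) y;
  gl_d_op : forall x y, d (op x y) = op (d x) y;
  gl_op_u : forall x y, op x (u y) = op x y;
  gl_op_d : forall x y, op x (d y) = op x y }.

Definition diag (X : Type) (op : X -> X -> X) : X -> X := fun x => op x x.

(* block GL-rack: all cycles of Delta have the same length *)
Definition is_block (X : finType) (op : X -> X -> X) : Prop :=
  forall x y : X, order (diag op) x = order (diag op) y.

(* (Xt, opt, ut, dt) with projection pi is the induced GL-quandle of X: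
   the points of Xt are (in bijection with) the blocks = Delta-cycles of X,
   pi sends each block to its point, and the operations are induced:
   a_i ~* a_j = pi(A_i * A_j), ut(a_i) = pi(u(A_i)), dt(a_i) = pi(d(A_i)). *)
Record is_induced_GLquandle (X : finType) (op : X -> X -> X) (u d : X -> X)
    (Xt : finType) (opt : Xt -> Xt -> Xt) (ut dt : Xt -> Xt) (pi : X -> Xt)
    : Prop := {
  ind_surj : forall a : Xt, exists x : X, pi x = a;
  ind_blocks : forall x y : X, pi x = pi y <-> fconnect (diag op) x y;
  ind_op : forall x y : X, pi (op x y) = opt (pi x) (pi y);
  ind_u : forall x : X, pi (u x) = ut (pi x);
  ind_d : forall x : X, pi (d x) = dt (pi x) }.

(* Arcs x_1..x_n are indexed by 'I_n (x_1 is index 0), ordS i is the next arc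
   (cyclically).  Relation r_i :  u^(p i) d^(q i) (x_i) *^(eps i) x_(k i) = x_(i+1),
   where eps i = true means exponent +1 and false means -1.  The relation
   w *^-1 y = z is written in the equivalent form w = z * y. *)
Definition rel_holds (T : eqType) (op : T -> T -> T) (u d : T -> T) (n : nat)
    (p q : 'I_n -> nat) (eps : 'I_n -> bool) (k : 'I_n -> 'I_n)
    (f : 'I_n -> T) (i : 'I_n) : bool :=
  let w := iter (p i) u (iter (q i) d (f i)) in
  if eps i then op w (f (k i)) == f (ordS i) else w == op (f (ordS i)) (f (k i)).

Definition homs (T : finType) (op : T -> T -> T) (u d : T -> T) (n : nat)
    (p q : 'I_n -> nat) (eps : 'I_n -> bool) (k : 'I_n -> 'I_n)
    : {set {ffun 'I_n -> T}} :=
  [set f : {ffun 'I_n -> T} | [forall i, rel_holds op u d p q eps k f i]].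

Definition lifts (X Xt : finType) (op : X -> X -> X) (u d : X -> X) (pi : X -> Xt)
    (n : nat) (p q : 'I_n -> nat) (eps : 'I_n -> bool) (k : 'I_n -> 'I_n)
    (psi : {ffun 'I_n -> Xt}) : {set {ffun 'I_n -> X}} :=
  [set phi in homs op u d p q eps k | [forall i, pi (phi i) == psi i]].

Definition stab_counts (n : nat) (i1 : 'I_n) (N : nat) (c : 'I_n -> nat) : 'I_n -> nat :=
  fun i => if i == i1 then 2 * N + c i else c i.

From mathcomp Require Import all_boot.
Set Implicit Arguments. Unset Strict Implicit. Unset Printing Implicit Defensive.

(* The 2N zigzags added to the arc x_1 multiply the word of relation r_1 by
   (ud)^(2N) = Delta^(-2N).  In the induced GL-quandle ud is the identity, so
   both presentations have the same homomorphisms to it.  Two lifts of psi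
   differ arc by arc by powers Delta^(t_i) inside the blocks; comparing the
   relations r_i of a lift for K and of a lift for the stabilized knot gives
   t_i = c_i + t_(i+1) modulo the common cycle length m of Delta, where
   c_1 = 2N and c_i = 0 otherwise, and summing around the cyclically ordered
   arcs leaves 2N = 0 (mod m), i.e. Delta^(2N) = id.  Conversely, if
   Delta^(2N) = id then every lift for K is a lift for the stabilized knot. *)

Section IterCommute.
Variables (T : Type) (f g : T -> T).
Hypothesis fg : forall x, f (g x) = g (f x).

Lemma iter_commute a x : f (iter a g x) = iter a g (f x).
Proof. by elim: a => //= a IHa; rewrite fg IHa. Qed.

Lemma iter_iter_commute a b x : iter a f (iter b g x) = iter b g (iter a f x).
Proof. by elim: a => //= a IHa; rewrite IHa iter_commute. Qed.

Lemma iter_comp_commute a x : iter a f (iter a g x) = iter a (f \o g) x.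
Proof.
elim: a => //= a IHa; rewrite -IHa; congr f.
exact: (iter_iter_commute a 1).
Qed.

End IterCommute.

Lemma iterD_commute (T : Type) (f g : T -> T) :
    (forall x, f (g x) = g (f x)) ->
  forall c a b x,
    iter (c + a) f (iter (c + b) g x) = iter c (f \o g) (iter a f (iter b g x)).
Proof.
move=> fg c a b x.
by rewrite !iterD (iter_iter_commute fg a) (iter_comp_commute fg).
Qed.

Lemma iter_can (T : Type) (f g : T -> T) :
  cancel f g -> forall a, cancel (iter a f) (iter a g).
Proof. by move=> fK; elim=> // a IHa x; rewrite iterSr fK IHa. Qed.

Lemma iter_mod_order (T : finType) (f : T -> T) : injective f ->
  forall a x, iter a f x = iter (a %% order f x) f x.
Proof.
move=> f_inj a x; rewrite {1}(divn_eq a (order f x)) addnC iterD iterM.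
by rewrite (iter_fix _ (iter_order f_inj x)).
Qed.

Lemma eq_iter_mod_order (T : finType) (f : T -> T) : injective f ->
  forall a b x, iter a f x = iter b f x -> a = b %[mod order f x].
Proof.
move=> f_inj a b x; rewrite (iter_mod_order f_inj a) (iter_mod_order f_inj b).
move/(congr1 (findex f x)).
by rewrite !findex_iter // ltn_pmod // order_gt0.
Qed.

Lemma cyclic_sum_mod n m (c t : 'I_n -> nat) :
  (forall i, c i + t (ordS i) = t i %[mod m]) -> \sum_i c i = 0 %[mod m].
Proof.
move=> ct; have : \sum_i (c i + t (ordS i)) = \sum_i t i %[mod m].
  by rewrite -modn_summ -[RHS]modn_summ; congr (_ %% m); apply: eq_bigr.
have sum_tS : \sum_i t (ordS i) = \sum_i t i.
  by rewrite [RHS](reindex_inj (@ordS_inj n)).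
rewrite big_split /= sum_tS -{2}[\sum_i t i]add0n.
by move/eqP; rewrite eqn_modDr => /eqP.
Qed.

Section GLRack.
Variables (X : Type) (op : X -> X -> X) (u d : X -> X).
Hypothesis HX : is_GLrack op u d.
Local Notation D := (diag op).

Lemma diag_ud x : D (u (d x)) = x.
Proof.
rewrite /diag -(gl_u_op HX) -(gl_d_op HX) (gl_op_u HX) (gl_op_d HX).
exact: (gl_ud HX x).
Qed.

Lemma diag_inj : injective D.
Proof. exact: (@can_inj _ _ D (u \o d) (gl_ud HX)). Qed.

Lemma ud_commute x : u (d x) = d (u x).
Proof. by rewrite -{2}[x]diag_ud (gl_du HX). Qed.

Lemma u_diag x : u (D x) = D (u x).
Proof. by rewrite /diag (gl_u_op HX) (gl_op_u HX). Qed.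

Lemma d_diag x : d (D x) = D (d x).
Proof. by rewrite /diag (gl_d_op HX) (gl_op_d HX). Qed.

Lemma op_iter_diagr a x y : op x (iter a D y) = op x y.
Proof.
elim: a => //= a <-.
by rewrite -{2}(gl_ud HX (iter a D y)) (gl_op_u HX) (gl_op_d HX).
Qed.

Lemma iter_diag_opl a x y : op (iter a D x) y = iter a D (op x y).
Proof. by elim: a => //= a <-; rewrite /diag (rack_dist HX). Qed.

Lemma iter_ud_opl a x y :
  op (iter a (u \o d) x) y = iter a (u \o d) (op x y).
Proof. by elim: a => //= a <-; rewrite (gl_d_op HX) (gl_u_op HX). Qed.

Lemma iter_ud_period a : iter a D =1 id -> iter a (u \o d) =1 id.
Proof. by move=> Da x; rewrite -{1}[x]Da (@iter_can _ D (u \o d) (gl_ud HX)). Qed.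

Lemma iter_cusps_diag c p q t x :
  iter (c + p) u (iter (c + q) d (iter t D x))
  = iter c (u \o d) (iter t D (iter p u (iter q d x))).
Proof.
rewrite (iterD_commute ud_commute).
by rewrite (iter_iter_commute d_diag) (iter_iter_commute u_diag).
Qed.

End GLRack.

Lemma stab_countsE n (i1 : 'I_n) N c i :
  stab_counts i1 N c i = (if i == i1 then 2 * N else 0) + c i.
Proof. by rewrite /stab_counts; case: ifP. Qed.

Section AddCusps.
Variables (n : nat) (p q p' q' c : 'I_n -> nat) (eps : 'I_n -> bool) (k : 'I_n -> 'I_n).
Hypotheses (p'E : forall i, p' i = c i + p i) (q'E : forall i, q' i = c i + q i).

Lemma homs_add_cusps (T : finType) (op : T -> T -> T) (u d : T -> T) :
    (forall x, u (d x) = d (u x)) -> (forall i, iter (c i) (u \o d) =1 id) ->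
  homs op u d p' q' eps k = homs op u d p q eps k.
Proof.
move=> ud_comm ud_period; apply/setP=> f; rewrite !inE.
apply: eq_forallb => i; rewrite /rel_holds p'E q'E.
by rewrite (iterD_commute ud_comm) ud_period.
Qed.

Lemma rel_holds_add_cusps_shift (X : eqType) (op : X -> X -> X) (u d : X -> X)
    (f g : 'I_n -> X) (t : 'I_n -> nat) i :
    is_GLrack op u d -> (forall j, g j = iter (t j) (diag op) (f j)) ->
    rel_holds op u d p q eps k f i -> rel_holds op u d p' q' eps k g i ->
  exists y, iter (t i) (diag op) y = iter (c i + t (ordS i)) (diag op) y.
Proof.
move=> HX gE; rewrite /rel_holds !gE p'E q'E iter_cusps_diag //.
have shift y : iter (c i) (u \o d) (iter (t i) (diag op) y)
                 = iter (t (ordS i)) (diag op) y ->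
               iter (t i) (diag op) y = iter (c i + t (ordS i)) (diag op) y.
  by move=> shift_eq; rewrite iterD -shift_eq (iter_can (f := u \o d) (diag_ud HX)).
case: (eps i) => /eqP rel /eqP rel'.
- exists (f (ordS i)); apply: shift.
  by rewrite -rel' (op_iter_diagr HX) (iter_ud_opl HX) (iter_diag_opl HX) rel.
- exists (op (f (ordS i)) (f (k i))); apply: shift.
  by rewrite -{1}rel rel' (op_iter_diagr HX) (iter_diag_opl HX).
Qed.

Lemma homs_add_cusps_diag_period (X : finType) (op : X -> X -> X) (u d : X -> X)
    (phi phi' : {ffun 'I_n -> X}) :
    is_GLrack op u d -> is_block op ->
    phi \in homs op u d p q eps k -> phi' \in homs op u d p' q' eps k ->
    (forall i, fconnect (diag op) (phi i) (phi' i)) ->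
  iter (\sum_i c i) (diag op) =1 id.
Proof.
move=> HX Hblock; rewrite !inE => /forallP hom_phi /forallP hom_phi' same_block x.
pose t i := findex (diag op) (phi i) (phi' i).
have phi'E i : phi' i = iter (t i) (diag op) (phi i) by rewrite iter_findex.
suff sum_c0 : \sum_i c i = 0 %[mod order (diag op) x].
  by rewrite (iter_mod_order (diag_inj HX)) sum_c0 mod0n.
apply: (cyclic_sum_mod (t := t)) => i.
have [y shift] := rel_holds_add_cusps_shift HX phi'E (hom_phi i) (hom_phi' i).
by rewrite (Hblock x y) -(eq_iter_mod_order (diag_inj HX) shift).
Qed.

End AddCusps.

Section InducedGLQuandle.
Variables (X : finType) (op : X -> X -> X) (u d : X -> X).
Variables (Xt : finType) (opt : Xt -> Xt -> Xt) (ut dt : Xt -> Xt) (pi : X -> Xt).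
Hypotheses (HX : is_GLrack op u d) (Hind : is_induced_GLquandle op u d opt ut dt pi).

Lemma pi_diag x : pi (diag op x) = pi x.
Proof. by apply/esym/(ind_blocks Hind); apply: fconnect1. Qed.

Lemma induced_ud a : ut (dt a) = a.
Proof.
have [x <-] := ind_surj Hind a.
by rewrite -(ind_d Hind) -(ind_u Hind) -{2}(diag_ud HX x) pi_diag.
Qed.

Lemma induced_ud_commute a : ut (dt a) = dt (ut a).
Proof.
have [x <-] := ind_surj Hind a.
by rewrite -(ind_d Hind) -!(ind_u Hind) -(ind_d Hind) (ud_commute HX).
Qed.

End InducedGLQuandle.

Theorem lemma4p3
    (X : finType) (op : X -> X -> X) (u d : X -> X)
    (HX : is_GLrack op u d) (Hblock : is_block op)
    (Xt : finType) (opt : Xt -> Xt -> Xt) (ut dt : Xt -> Xt) (pi : X -> Xt)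
    (Hind : is_induced_GLquandle op u d opt ut dt pi)
    (n : nat) (n_gt0 : 0 < n)
    (p q : 'I_n -> nat) (eps : 'I_n -> bool) (k : 'I_n -> 'I_n)
    (N : nat) (N_gt0 : 0 < N) :
  let i1 := Ordinal n_gt0 in
  let p' := stab_counts i1 N p in
  let q' := stab_counts i1 N q in
  homs opt ut dt p q eps k = homs opt ut dt p' q' eps k /\
  (forall psi : {ffun 'I_n -> Xt},
     psi \in homs opt ut dt p q eps k ->
     #|lifts op u d pi p q eps k psi| != 0 ->
     (#|lifts op u d pi p' q' eps k psi| != 0 <-> iter (2 * N) (diag op) =1 id)).
Proof.
move=> i1 p' q'.
pose c i := if i == i1 then 2 * N else 0.
have sum_c : \sum_i c i = 2 * N by rewrite -big_mkcond big_pred1_eq.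
have p'E i : p' i = c i + p i by apply: stab_countsE.
have q'E i : q' i = c i + q i by apply: stab_countsE.
split.
  rewrite (homs_add_cusps eps k p'E q'E opt (induced_ud_commute HX Hind)) // => i a.
  exact/iter_fix/(induced_ud HX Hind).
move=> psi _; rewrite !cards_eq0 => /set0Pn[phi].
rewrite inE => /andP[hom_phi lift_phi]; split.
- case/set0Pn=> phi'; rewrite inE => /andP[hom_phi' lift_phi'].
  rewrite -sum_c.
  apply: (homs_add_cusps_diag_period p'E q'E HX Hblock hom_phi hom_phi') => i.
  apply/(ind_blocks Hind).
  by rewrite (eqP (forallP lift_phi i)) (eqP (forallP lift_phi' i)).
- move=> period; apply/set0Pn; exists phi.
  rewrite inE (homs_add_cusps eps k p'E q'E op).
  + by rewrite hom_phi lift_phi.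
  + exact: ud_commute HX.
  + by move=> i x; rewrite /c; case: ifP => _ //; rewrite (iter_ud_period HX period).
Qed.
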